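(* Let $U$ be a finite nonempty set, $R$ an equivalence relation on $U$, and $M(R)$ the support matroid induced by $R$. Then the family $\mathbf{B}(R)$ of bases of $M(R)$ is $$\mathbf{B}(R)=\{X\subseteq U\mid \forall x\in U,\ |RN(x)\cap X|=1\}.$$
   Context: For $x\in U$, $RN(x)=\{y\in U\mid xRy\}$; $R^{*}(X)=\{x\in U\mid RN(x)\cap X\neq\emptyset\}$. Let $\mathbf{S}(R)=\{X\subseteq U\mid R^{*}(X)=U\}$. The support matroid $M(R)=(U,\mathbf{I}(R))$ is the matroid on $U$ whose independent sets $\mathbf{I}(R)$ are the subsets of inclusion-minimal members of $\mathbf{S}(R)$; it is a matroid whose support sets (subsets of $U$ containing a base) are exactly the members of $\mathbf{S}(R)$. A base of a matroid is an inclusion-maximal independent set. *)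

From mathcomp Require Import all_boot.
Set Implicit Arguments. Unset Strict Implicit. Unset Printing Implicit Defensive.

Section Support.
Variables (U : finType) (R : rel U).

Definition RN (x : U) : {set U} := [set y | R x y].

Definition Rstar (X : {set U}) : {set U} := [set x | RN x :&: X != set0].

Definition supp_fam : {set {set U}} := [set X | Rstar X == setT].

Definition indep (I : {set U}) : Prop :=
  exists2 Y : {set U}, minset (fun Z => Z \in supp_fam) Y & I \subset Y.

Definition base (B : {set U}) : Prop :=
  indep B /\ forall I : {set U}, indep I -> B \subset I -> I = B.

End Support.

From mathcomp Require Import all_boot.

Set Implicit Arguments.
Unset Strict Implicit.
Unset Printing Implicit Defensive.

(* For an equivalence relation the neighbourhoods RN(x) are the equivalence
   classes, and a set X meets every class (X is in S(R)) iff R^*(X) = U.  The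
   minimal members of S(R) are thus the transversals of the partition into
   classes, and their subsets the partial transversals (sets meeting each
   class at most once): a partial transversal extends to a transversal by
   adding one point from each missed class.  A partial transversal containing
   a transversal X meets each class exactly where X does, so it is X; hence
   the bases are exactly the transversals. *)

Section EquivalenceSupport.
Variables (U : finType) (R : rel U).
Hypothesis eqR : equivalence_rel R.

Definition transversal (X : {set U}) := forall x, #|RN R x :&: X| = 1.

Definition partial_transversal (I : {set U}) := [forall x, #|RN R x :&: I| <= 1].

Lemma RN_refl x : x \in RN R x.
Proof. by rewrite inE; case: (eqR x x x). Qed.

Lemma RN_eq {x y} : y \in RN R x -> RN R x = RN R y.
Proof. by rewrite inE => Rxy; apply/setP => z; rewrite !inE (eqR x y z).2. Qed.

Lemma RNI1_set0 x z : x \notin RN R z -> RN R z :&: [set x] = set0.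
Proof.
move=> xNz; apply/setP => w; rewrite !inE; apply/andP => -[Rzw /eqP wx].
by rewrite inE -wx Rzw in xNz.
Qed.

Lemma supp_famP X : reflect (forall x, 0 < #|RN R x :&: X|) (X \in supp_fam R).
Proof.
rewrite inE; apply: (iffP eqP) => [suppX x | meetX].
  have: x \in Rstar R X by rewrite suppX inE.
  by rewrite inE card_gt0.
by apply/setP => x; rewrite !inE -card_gt0 meetX.
Qed.

Lemma supp_famD1 {Y a b} :
  Y \in supp_fam R -> a != b -> b \in RN R a :&: Y -> Y :\ a \in supp_fam R.
Proof.
move=> /supp_famP suppY neab; rewrite inE => /andP[bNa bY].
apply/supp_famP => z; rewrite card_gt0; case: (boolP (a \in RN R z)) => aNz.
  apply/set0Pn; exists b.
  by rewrite in_setI (RN_eq aNz) bNa !inE eq_sym neab bY.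
have /set0Pn[c] : RN R z :&: Y != set0 by rewrite -card_gt0.
rewrite !inE => /andP[cNz cY]; apply/set0Pn; exists c.
by rewrite !inE cNz cY andbT; apply: contraNneq aNz => <-; rewrite inE.
Qed.

Lemma minset_supp_famP Y :
  minset (fun Z => Z \in supp_fam R) Y <-> transversal Y.
Proof.
split=> [/minsetP[suppY minY] x | transY].
  apply/eqP; rewrite eqn_leq (supp_famP _ suppY x) andbT.
  apply/card_le1_eqP => b a bY aY; apply: contraTeq isT => neab.
  have bNa : b \in RN R a :&: Y.
    by move: aY bY; rewrite !in_setI => /andP[/RN_eq <- _] /andP[-> ->].
  have /setP/(_ a) := minY _ (supp_famD1 suppY neab bNa) (subD1set Y a).
  by rewrite !inE eqxx; case/setIP: aY => _ ->.
apply/minsetP; split=> [|Z suppZ sZY]; first by apply/supp_famP => x; rewrite transY.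
apply/eqP; rewrite eqEsubset sZY; apply/subsetP => y yY.
have [z] : exists z, z \in RN R y :&: Z.
  by apply/set0Pn; rewrite -card_gt0 (supp_famP _ suppZ).
rewrite inE => /andP[zNy zZ].
have /card_le1_eqP/(_ y z) <- // : #|RN R y :&: Y| <= 1 by rewrite transY.
  by rewrite inE RN_refl.
by rewrite inE zNy (subsetP sZY).
Qed.

Lemma partial_transversalU1 {x Y} : partial_transversal Y ->
  RN R x :&: Y = set0 -> partial_transversal (x |: Y).
Proof.
move=> /forallP partY missxY; apply/forallP => z; rewrite setIUr.
case: (boolP (x \in RN R z)) => [xNz | /RNI1_set0 ->]; last by rewrite set0U.
by rewrite (RN_eq xNz) missxY setU0 (setIidPr _) ?cards1 // sub1set RN_refl.
Qed.

Lemma indepP I : indep R I <-> partial_transversal I.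
Proof.
split=> [[Y /minset_supp_famP transY sIY] | partI].
  by apply/forallP => x; rewrite -(transY x) subset_leq_card ?setIS.
have [Y /maxsetP[partY maxY] sIY] := maxset_exists partI.
exists Y => //; apply/minset_supp_famP => x.
apply/eqP; rewrite eqn_leq (forallP partY) card_gt0 /=; apply/negP => /eqP missxY.
have /setP/(_ x) := maxY _ (partial_transversalU1 partY missxY) (subsetUr _ _).
rewrite !inE eqxx => xY.
by move/setP/(_ x): missxY; rewrite in_setI RN_refl !inE -xY.
Qed.

Lemma transversal_maximal I X :
  transversal X -> partial_transversal I -> X \subset I -> I = X.
Proof.
move=> transX /forallP partI sXI; apply/eqP; rewrite eqEsubset sXI andbT.
apply/subsetP => i iI.
have sXIi : RN R i :&: X \subset RN R i :&: I by apply: setIS.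
have /subsetP/(_ i) : RN R i :&: I \subset RN R i :&: X.
  by rewrite -(geq_leqif (subset_leqif_card sXIi)) transX partI.
by rewrite in_setI RN_refl iI => /(_ isT); rewrite inE => /andP[].
Qed.

End EquivalenceSupport.

Theorem proposition5 (U : finType) (R : rel U) :
  0 < #|U| -> equivalence_rel R ->
  forall X : {set U}, base R X <-> (forall x : U, #|RN R x :&: X| = 1).
Proof.
move=> _ eqR X; split.
  move=> [[Y minY sXY] maxX].
  have indepY : indep R Y by exists Y.
  by rewrite -(maxX _ indepY sXY); apply/(minset_supp_famP eqR).
move=> transX; split; first by exists X => //; apply/(minset_supp_famP eqR).
by move=> I /(indepP eqR); apply: transversal_maximal.
Qed.
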